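(* Under the standing assumptions below, let $P_j\in Y$ denote the $j$-th column $(P_{ij})_{i\in\mathbb{N}}$ of $P$ and $P_i^\top\in Y^*$ the $i$-th row, acting by $y\mapsto\sum_jP_{ij}y_j$. Then: 1. each $P_j$ is an eigenvector of $\tilde T$ with eigenvalue $-a_j$; 2. each $P_i^\top$ is an eigenvector of the adjoint $\tilde T^*:Y^*\to Y^*$ with eigenvalue $-a_i$.
   Context: Standing assumptions: $X$ is one of $\ell^p$ ($1\le p\le\infty$), $c$, $c_0$; $(a_n)$ strictly decreasing positive reals, $a_n\to0$; $b=(b_n)\in X$ with $b_n>0$; $\pi_n:=2\prod_{m\ge1,\,m\ne n}\frac{1+a_m/a_n}{1-a_m/a_n}$ with $\pi\in\ell^\infty$; $\phi_{ij}:=\frac{b_i/b_j}{1+a_i/a_j}$ satisfies $\phi_{ij}\le C\mu^{|i-j|}$ for some $C>0$, $\mu\in(0,1)$. $Y:=\{(y_n)\mid(b_ny_n)\in X\}$ with $\|y\|_Y:=\|(b_ny_n)\|_X$. $P_{ij}:=\frac{a_j\pi_j}{a_i+a_j}$. $A:Y\to Y$ is $(y_n)\mapsto(a_ny_n)$, $\tilde k:=(-a_n\pi_n)$ acting on $Y$ by $y\mapsto\sum_n\tilde k_ny_n$, $\mathbf{1}$ the all-ones sequence, and $\tilde T:=A+\mathbf{1}\tilde k:Y\to Y$, $y\mapsto Ay+(\tilde ky)\mathbf{1}$. *)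

From Stdlib Require Import Reals.
From Coquelicot Require Import Coquelicot.
Open Scope R_scope.

(* Sequences are indexed by nat starting at 0 (the paper starts at 1). *)

Inductive seqspace : Type :=
  | SLp (p : R)
  | SLinf
  | Sc
  | Sc0.

Definition valid_space (X : seqspace) : Prop :=
  match X with SLp p => 1 <= p | _ => True end.

(* |x|^p with the convention 0^p = 0 (p > 0). *)
Definition rpow_abs (x p : R) : R :=
  if Req_EM_T x 0 then 0 else Rpower (Rabs x) p.

Definition in_X (X : seqspace) (x : nat -> R) : Prop :=
  match X with
  | SLp p => ex_series (fun n => rpow_abs (x n) p)
  | SLinf => exists M, forall n, Rabs (x n) <= M
  | Sc => exists l : R, is_lim_seq x l
  | Sc0 => is_lim_seq x 0
  end.

Definition norm_X (X : seqspace) (x : nat -> R) : R :=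
  match X with
  | SLp p => rpow_abs (Series (fun n => rpow_abs (x n) p)) (1 / p)
  | _ => real (Sup_seq (fun n => Finite (Rabs (x n))))
  end.

Definition in_Y (X : seqspace) (b : nat -> R) (y : nat -> R) : Prop :=
  in_X X (fun n => b n * y n).

Definition norm_Y (X : seqspace) (b : nat -> R) (y : nat -> R) : R :=
  norm_X X (fun n => b n * y n).

Fixpoint pprod (a : nat -> R) (n N : nat) : R :=
  match N with
  | O => 1
  | S N' => pprod a n N' *
      (if Nat.eq_dec N' n then 1 else (1 + a N' / a n) / (1 - a N' / a n))
  end.

Definition is_pi (a : nat -> R) (pi : nat -> R) : Prop :=
  forall n, is_lim_seq (fun N => 2 * pprod a n N) (pi n).

Definition absdiff (i j : nat) : nat := (i - j + (j - i))%nat.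

Definition phi (a b : nat -> R) (i j : nat) : R := (b i / b j) / (1 + a i / a j).

Definition Pmat (a pi : nat -> R) (i j : nat) : R := a j * pi j / (a i + a j).

Definition ktilde (a pi : nat -> R) (y : nat -> R) : R :=
  Series (fun n => - a n * pi n * y n).

Definition Ttilde (a pi : nat -> R) (y : nat -> R) : nat -> R :=
  fun i => a i * y i + ktilde a pi y.

Definition Prow (a pi : nat -> R) (i : nat) (y : nat -> R) : R :=
  Series (fun j => Pmat a pi i j * y j).

Definition eigvec_Ttilde (X : seqspace) (a b pi : nat -> R) (v : nat -> R) (lam : R) : Prop :=
  in_Y X b v /\ (exists i, v i <> 0) /\
  ex_series (fun n => - a n * pi n * v n) /\
  (forall i, Ttilde a pi v i = lam * v i).

(* f (given by a series formula) is an element of Y^* (continuous linear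
   functional: the series converges on Y and is bounded by C ||y||_Y),
   nonzero, and an eigenvector of the adjoint: Ttilde^* f = f o Ttilde = lam f. *)
Definition eigvec_adjoint (X : seqspace) (a b pi : nat -> R) (c : nat -> R) (lam : R) : Prop :=
  let f := fun y => Series (fun j => c j * y j) in
  (forall y, in_Y X b y -> ex_series (fun j => c j * y j)) /\
  (exists C, forall y, in_Y X b y -> Rabs (f y) <= C * norm_Y X b y) /\
  (exists y, in_Y X b y /\ f y <> 0) /\
  (forall y, in_Y X b y -> f (Ttilde a pi y) = lam * f y).

(* The heart of the matter is the identity  sum_n a_n pi_n / (a_n + a_j) = 1  for every j.
   For finitely many factors it is the partial fraction expansion of
   prod_{m<N} (z + a_m)/(z - a_m), whose residue at a_n is 2 a_n prod_{m<N, m<>n} (a_n + a_m)/(a_n - a_m),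
   evaluated at its zero z = -a_j.  These partial products grow in absolute value towards |pi_n|,
   and the bound on phi forces a_n = O(mu^n), so the identity passes to the limit N -> oo.
   It gives ktilde P_j = -a_j pi_j, hence Ttilde P_j = -a_j P_j, and sum_j P_ij = 1, hence
   P_i^T (Ttilde y) = -a_i P_i^T y.  The bound on phi also makes the columns of P decay
   geometrically in Y and the rows bounded functionals on Y. *)

From Stdlib Require Import Reals Lra Lia.
From Coquelicot Require Import Coquelicot.
Open Scope R_scope.

Fixpoint psum (f : nat -> R) (N : nat) : R :=
  match N with O => 0 | S N' => psum f N' + f N' end.

Lemma psum_ext f g N : (forall n, (n < N)%nat -> f n = g n) -> psum f N = psum g N.
Proof.
  induction N as [|N IH]; intros Hfg; simpl; [reflexivity|].
  rewrite IH, Hfg; [reflexivity | lia | intros; apply Hfg; lia].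
Qed.

Lemma psum_plus f g N : psum (fun n => f n + g n) N = psum f N + psum g N.
Proof. induction N as [|N IH]; simpl; [lra | rewrite IH; lra]. Qed.

Lemma psum_scal c f N : psum (fun n => c * f n) N = c * psum f N.
Proof. induction N as [|N IH]; simpl; [lra | rewrite IH; lra]. Qed.

Lemma sum_n_psum f N : sum_n f N = psum f (S N).
Proof.
  induction N as [|N IH].
  - rewrite sum_O; simpl; lra.
  - rewrite sum_Sn, IH; reflexivity.
Qed.

Lemma psum_add f K d : psum f (K + d) = psum f K + psum (fun k => f (K + k)%nat) d.
Proof.
  induction d as [|d IH]; simpl.
  - rewrite Nat.add_0_r; lra.
  - rewrite Nat.add_succ_r; simpl; rewrite IH; lra.
Qed.

Lemma psum_nonneg f N : (forall n, 0 <= f n) -> 0 <= psum f N.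
Proof. intros Hf; induction N as [|N IH]; simpl; [lra | pose proof (Hf N); lra]. Qed.

Lemma Rabs_psum_le f g N :
  (forall n, (n < N)%nat -> Rabs (f n) <= g n) -> Rabs (psum f N) <= psum g N.
Proof.
  induction N as [|N IH]; intros Hfg; simpl.
  - rewrite Rabs_R0; lra.
  - eapply Rle_trans; [apply Rabs_triang|].
    assert (Rabs (psum f N) <= psum g N) by (apply IH; intros; apply Hfg; lia).
    specialize (Hfg N ltac:(lia)); lra.
Qed.

Lemma psum_geom_le mu N : 0 <= mu < 1 -> psum (fun k => mu ^ k) N <= 1 / (1 - mu).
Proof.
  intros Hmu.
  assert (Hclosed : psum (fun k => mu ^ k) N = (1 - mu ^ N) / (1 - mu)).
  { induction N as [|N IH]; simpl; [field; lra | rewrite IH; field; lra]. }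
  rewrite Hclosed; unfold Rdiv.
  apply Rmult_le_compat_r; [left; apply Rinv_0_lt_compat; lra|].
  pose proof (pow_le mu N (proj1 Hmu)); lra.
Qed.

Lemma is_lim_seq_psum (u : nat -> nat -> R) (v : nat -> R) K :
  (forall n, is_lim_seq (fun N => u N n) (v n)) ->
  is_lim_seq (fun N => psum (u N) K) (psum v K).
Proof.
  intros Huv; induction K as [|K IH]; simpl.
  - apply is_lim_seq_const.
  - apply (is_lim_seq_plus' _ _ _ _ IH (Huv K)).
Qed.

Lemma a_inj_of_decr (a : nat -> R) :
  (forall n, a (S n) < a n) -> forall m n, m <> n -> a m <> a n.
Proof.
  intros Hdec.
  assert (Hlt : forall m n, (m < n)%nat -> a n < a m).
  { intros m n Hmn; induction Hmn as [|n _ IH]; [apply Hdec|specialize (Hdec n); lra]. }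
  intros m n Hmn; destruct (Nat.lt_gt_cases m n) as [[H|H] _]; [exact Hmn| |];
    [specialize (Hlt m n H) | specialize (Hlt n m H)]; lra.
Qed.

Lemma le_a0_of_decr (a : nat -> R) : (forall n, a (S n) < a n) -> forall n, a n <= a 0%nat.
Proof. intros Hdec n; induction n as [|n IH]; [lra | specialize (Hdec n); lra]. Qed.

Lemma pow_le_decr mu k m : 0 <= mu <= 1 -> (k <= m)%nat -> mu ^ m <= mu ^ k.
Proof.
  intros Hmu Hkm; replace m with (k + (m - k))%nat by lia; rewrite pow_add.
  pose proof (pow_le mu k (proj1 Hmu)).
  pose proof (pow_incr mu 1 (m - k) Hmu); rewrite pow1 in *; nra.
Qed.

Lemma is_lim_seq_geometric_bound (z : nat -> R) D mu :
  0 < mu < 1 -> (forall n, Rabs (z n) <= D * mu ^ n) -> is_lim_seq z 0.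
Proof.
  intros Hmu Hz.
  assert (Hg : is_lim_seq (fun n => D * mu ^ n) 0).
  { replace (Finite 0) with (Finite (D * 0)) by (f_equal; ring).
    apply (is_lim_seq_scal_l _ D (Finite 0)), is_lim_seq_geom.
    rewrite Rabs_right; lra. }
  apply is_lim_seq_le_le with (u := fun n => - (D * mu ^ n)) (w := fun n => D * mu ^ n).
  - intros n; specialize (Hz n); apply Rabs_le_between in Hz; lra.
  - replace (Finite 0) with (Rbar_opp 0) by (simpl; f_equal; ring).
    apply (is_lim_seq_opp _ (Finite 0)); exact Hg.
  - exact Hg.
Qed.

(** * Partial fractions for the products defining [pi] *)

Section PartialFractions.

Variable a : nat -> R.
Hypothesis a_pos : forall n, 0 < a n.
Hypothesis a_inj : forall m n, m <> n -> a m <> a n.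

Fixpoint cayley_prod (N : nat) (z : R) : R :=
  match N with
  | O => 1
  | S N' => cayley_prod N' z * ((z + a N') / (z - a N'))
  end.

Lemma pprod_cayley_prod n N : (N <= n)%nat -> pprod a n N = cayley_prod N (a n).
Proof.
  induction N as [|N IH]; intros HN; simpl; [reflexivity|].
  destruct (Nat.eq_dec N n) as [e|e]; [lia|].
  rewrite IH by lia; f_equal.
  pose proof (a_pos n); pose proof (a_inj N n e) as Hneq.
  field; split; [lra|].
  intros h; apply Hneq; field_simplify in h; lra.
Qed.

(* Partial fractions: the residue of [cayley_prod N] at its simple pole [a n]
   is [2 a n pprod a n N]. *)
Lemma cayley_prod_partial_fractions N z :
  (forall m, (m < N)%nat -> z <> a m) ->
  cayley_prod N z = 1 + psum (fun n => 2 * a n * pprod a n N / (z - a n)) N.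
Proof.
  revert z; induction N as [|N IH]; intros z Hz; simpl; [lra|].
  assert (HzN : z <> a N) by (apply Hz; lia).
  rewrite IH by (intros; apply Hz; lia).
  assert (Hres : pprod a N N = 1 + psum (fun n => 2 * a n * pprod a n N / (a N - a n)) N).
  { rewrite pprod_cayley_prod by lia. apply IH. intros m Hm; apply a_inj; lia. }
  destruct (Nat.eq_dec N N) as [_|e]; [|congruence].
  rewrite Rmult_1_r, Hres.
  set (c := (z + a N) / (z - a N)); set (d := - (2 * a N / (z - a N))).
  set (Sz := psum (fun n => 2 * a n * pprod a n N / (z - a n)) N).
  rewrite (psum_ext _ (fun n => c * (2 * a n * pprod a n N / (z - a n))
                                + d * (2 * a n * pprod a n N / (a N - a n)))).
  - rewrite psum_plus, !psum_scal; unfold c, d, Sz; field; lra.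
  - intros n Hn.
    destruct (Nat.eq_dec N n) as [e|e]; [lia|].
    assert (z <> a n) by (apply Hz; lia).
    assert (a N <> a n) by (apply a_inj; lia).
    pose proof (a_pos n); pose proof (a_pos N).
    unfold c, d; field; repeat split; lra.
Qed.

Lemma cayley_prod_root N j : (j < N)%nat -> cayley_prod N (- a j) = 0.
Proof.
  induction N as [|N IH]; intros Hj; simpl; [lia|].
  destruct (Nat.eq_dec j N) as [->|e].
  - replace (- a N + a N) with 0 by ring; unfold Rdiv; ring.
  - rewrite IH by lia; ring.
Qed.

(* Evaluate the partial fraction expansion at the zero [- a j]. *)
Lemma psum_pprod_weights N j :
  (j < N)%nat -> psum (fun n => a n * (2 * pprod a n N) / (a n + a j)) N = 1.
Proof.
  intros Hj.
  pose proof (cayley_prod_partial_fractions N (- a j)) as Hpf.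
  rewrite cayley_prod_root in Hpf by exact Hj.
  assert (Hroot : 0 = 1 + psum (fun n => 2 * a n * pprod a n N / (- a j - a n)) N).
  { apply Hpf; intros m _; pose proof (a_pos m); pose proof (a_pos j); lra. }
  rewrite (psum_ext _ (fun n => -1 * (2 * a n * pprod a n N / (- a j - a n)))).
  - rewrite psum_scal; lra.
  - intros n _; pose proof (a_pos n); pose proof (a_pos j); field; lra.
Qed.

Lemma Rabs_cayley_factor_ge1 t : 0 < t -> t <> 1 -> 1 <= Rabs ((1 + t) / (1 - t)).
Proof.
  intros Ht Ht1.
  destruct (Rlt_le_dec t 1) as [Hlt|Hge].
  - rewrite Rabs_right.
    + apply Rmult_le_reg_r with (1 - t); [lra|].
      replace ((1 + t) / (1 - t) * (1 - t)) with (1 + t) by (field; lra); lra.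
    + apply Rle_ge, Rlt_le, Rdiv_lt_0_compat; lra.
  - rewrite Rabs_left.
    + apply Rmult_le_reg_r with (t - 1); [lra|].
      replace (- ((1 + t) / (1 - t)) * (t - 1)) with (1 + t) by (field; lra); lra.
    + replace ((1 + t) / (1 - t)) with (- ((1 + t) / (t - 1))) by (field; lra).
      apply Ropp_lt_gt_0_contravar, Rdiv_lt_0_compat; lra.
Qed.

Lemma Rabs_pprod_le n N N' : (N <= N')%nat -> Rabs (pprod a n N) <= Rabs (pprod a n N').
Proof.
  induction 1 as [|N' _ IH]; [lra|].
  eapply Rle_trans; [exact IH|]; simpl.
  rewrite Rabs_mult.
  destruct (Nat.eq_dec N' n) as [e|e]; [rewrite Rabs_R1; lra|].
  rewrite <- (Rmult_1_r (Rabs (pprod a n N'))) at 1.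
  apply Rmult_le_compat_l; [apply Rabs_pos|].
  pose proof (a_pos N'); pose proof (a_pos n).
  apply Rabs_cayley_factor_ge1; [apply Rdiv_lt_0_compat; lra|].
  intros h; apply (a_inj N' n e).
  replace (a N') with (a N' / a n * a n) by (field; lra); rewrite h; ring.
Qed.

Lemma Rabs_pprod_le_pi pi : is_pi a pi -> forall n N, Rabs (2 * pprod a n N) <= Rabs (pi n).
Proof.
  intros hpi n N.
  assert (Hev : eventually (fun m => Rabs (2 * pprod a n N) <= Rabs (2 * pprod a n m))).
  { exists N; intros m Hm; rewrite !Rabs_mult.
    apply Rmult_le_compat_l; [apply Rabs_pos | apply Rabs_pprod_le; exact Hm]. }
  exact (is_lim_seq_le_loc _ _ _ _ Hev (is_lim_seq_const _) (is_lim_seq_abs _ _ (hpi n))).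
Qed.

End PartialFractions.

(** * The identity [sum_n a n pi n / (a n + a j) = 1] *)

Section WeightedSeries.

Variables (a pi : nat -> R) (K M mu : R).
Hypothesis a_pos : forall n, 0 < a n.
Hypothesis a_decr : forall n, a (S n) < a n.
Hypothesis hpi : is_pi a pi.
Hypothesis pi_bound : forall n, Rabs (pi n) <= M.
Hypothesis mu_range : 0 < mu < 1.
Hypothesis a_geom : forall n, a n <= K * mu ^ n.

Let a_inj := a_inj_of_decr a a_decr.

Lemma Rabs_pprod_weight_le x N n :
  0 < x -> Rabs (a n * (2 * pprod a n N) / (a n + x)) <= K * M / x * mu ^ n.
Proof.
  intros Hx; pose proof (a_pos n) as Han.
  pose proof (Rabs_pprod_le_pi a a_pos a_inj pi hpi n N).
  rewrite Rabs_div, Rabs_mult, (Rabs_right (a n)), (Rabs_right (a n + x)) by lra.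
  apply Rle_trans with (a n * M / x).
  - unfold Rdiv; rewrite !Rmult_assoc; apply Rmult_le_compat_l; [lra|].
    apply Rmult_le_compat; [apply Rabs_pos | left; apply Rinv_0_lt_compat; lra
                            | eapply Rle_trans; eauto | apply Rinv_le_contravar; lra].
  - replace (K * M / x * mu ^ n) with (K * mu ^ n * M / x) by (field; lra).
    unfold Rdiv; apply Rmult_le_compat_r; [left; apply Rinv_0_lt_compat; lra|].
    apply Rmult_le_compat_r; [|apply a_geom].
    eapply Rle_trans; [apply Rabs_pos | apply (pi_bound 0%nat)].
Qed.

(* For [N > j] the first [N] weights [a n (2 pprod a n N) / (a n + a j)] sum to 1,
   so the first [N0] of them differ from 1 by a geometric tail; let [N -> oo]. *)
Lemma Rabs_psum_weights_sub1_le j N0 :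
  Rabs (psum (fun n => a n * pi n / (a n + a j)) N0 - 1)
  <= K * M / a j * mu ^ N0 / (1 - mu).
Proof.
  set (u := fun N n => a n * (2 * pprod a n N) / (a n + a j)).
  set (E := K * M / a j).
  assert (HE : 0 <= E * mu ^ N0).
  { pose proof (Rabs_pprod_weight_le (a j) 0 N0 (a_pos j)).
    eapply Rle_trans; [apply Rabs_pos|eauto]. }
  assert (Hev : eventually (fun N => Rabs (psum (u N) N0 - 1) <= E * mu ^ N0 / (1 - mu))).
  { exists (S j + N0)%nat; intros N HN.
    pose proof (psum_pprod_weights a a_pos a_inj N j ltac:(lia)) as Hsum.
    change (psum (u N) N = 1) in Hsum.
    pose proof (psum_add (u N) N0 (N - N0)) as Hsplit.
    replace (N0 + (N - N0))%nat with N in Hsplit by lia.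
    replace (psum (u N) N0 - 1) with (- psum (fun k => u N (N0 + k)%nat) (N - N0)) by lra.
    rewrite Rabs_Ropp.
    eapply Rle_trans.
    - apply Rabs_psum_le with (g := fun k => E * mu ^ N0 * mu ^ k).
      intros k _; rewrite Rmult_assoc, <- pow_add; apply Rabs_pprod_weight_le, a_pos.
    - rewrite psum_scal; unfold Rdiv.
      rewrite <- (Rmult_1_l (/ (1 - mu))).
      apply Rmult_le_compat_l; [exact HE | apply psum_geom_le; lra]. }
  assert (Hlim : is_lim_seq (fun N => Rabs (psum (u N) N0 - 1))
                   (Rabs (psum (fun n => a n * pi n / (a n + a j)) N0 - 1))).
  { apply (is_lim_seq_abs _ (Finite (_ - 1))).
    apply is_lim_seq_plus'; [|apply is_lim_seq_const].
    apply is_lim_seq_psum; intros n; unfold u, Rdiv.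
    apply is_lim_seq_mult'; [|apply is_lim_seq_const].
    apply is_lim_seq_mult'; [apply is_lim_seq_const | apply hpi]. }
  exact (is_lim_seq_le_loc _ _ _ _ Hev Hlim (is_lim_seq_const _)).
Qed.

Lemma is_series_weights j : is_series (fun n => a n * pi n / (a n + a j)) 1.
Proof.
  set (w := sum_n (fun n => a n * pi n / (a n + a j))).
  assert (Hgeom : forall N, Rabs (w N - 1) <= K * M / a j * mu / (1 - mu) * mu ^ N).
  { intros N; unfold w; rewrite sum_n_psum.
    eapply Rle_trans; [apply Rabs_psum_weights_sub1_le|].
    simpl; right; pose proof (a_pos j); field; lra. }
  change (is_lim_seq w 1).
  apply is_lim_seq_ext with (fun N => (w N - 1) + 1); [intros; ring|].
  replace (Finite 1) with (Finite (0 + 1)) by (f_equal; ring).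
  apply is_lim_seq_plus'; [|apply is_lim_seq_const].
  exact (is_lim_seq_geometric_bound _ _ mu mu_range Hgeom).
Qed.

End WeightedSeries.

Lemma rpow_abs_nonneg x p : 0 <= rpow_abs x p.
Proof. unfold rpow_abs; destruct (Req_EM_T x 0); [lra | left; apply exp_pos]. Qed.

Lemma in_X_geometric_bound X (z : nat -> R) D mu :
  valid_space X -> 0 < D -> 0 < mu < 1 ->
  (forall n, Rabs (z n) <= D * mu ^ n) -> in_X X z.
Proof.
  intros hX HD Hmu Hz.
  assert (Hpow : forall n, 0 < mu ^ n) by (intros; apply pow_lt; lra).
  destruct X as [p| | |]; simpl in *.
  - assert (Hq : 0 < Rpower mu p < 1).
    { split; [apply exp_pos|].
      replace 1 with (Rpower 1 p) by (unfold Rpower; rewrite ln_1, Rmult_0_r, exp_0; reflexivity).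
      apply Rlt_Rpower_l; lra. }
    apply (@ex_series_le R_AbsRing R_CompleteNormedModule _
             (fun n => Rpower D p * Rpower mu p ^ n)).
    + intros n; change (norm (rpow_abs (z n) p)) with (Rabs (rpow_abs (z n) p)).
      rewrite Rabs_right by (apply Rle_ge, rpow_abs_nonneg).
      replace (Rpower D p * Rpower mu p ^ n) with (Rpower (D * mu ^ n) p).
      2:{ rewrite <- Rpower_mult_distr, <- !Rpower_pow, !Rpower_mult, Rmult_comm
            by (auto; lra || apply exp_pos); rewrite Rmult_comm, (Rmult_comm p); reflexivity. }
      unfold rpow_abs; destruct (Req_EM_T (z n) 0); [left; apply exp_pos|].
      apply Rle_Rpower_l; [lra|]; split; [apply Rabs_pos_lt; auto | apply Hz].
    + apply (ex_series_scal_l (Rpower D p) (fun n => Rpower mu p ^ n)).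
      apply ex_series_geom; rewrite Rabs_right; lra.
  - exists D; intros n; specialize (Hz n).
    pose proof (pow_le_decr mu 0 n ltac:(lra) ltac:(lia)); simpl in *; nra.
  - exists 0; exact (is_lim_seq_geometric_bound z D mu Hmu Hz).
  - exact (is_lim_seq_geometric_bound z D mu Hmu Hz).
Qed.

Lemma is_series_ge_term (f : nat -> R) l n :
  (forall k, 0 <= f k) -> is_series f l -> f n <= l.
Proof.
  intros Hf Hl.
  assert (Hpsum : forall N, (n < N)%nat -> f n <= psum f N).
  { induction 1 as [|N _ IH]; simpl.
    - pose proof (psum_nonneg f n Hf); lra.
    - pose proof (Hf N); lra. }
  assert (Hev : eventually (fun N => f n <= sum_n f N)).
  { exists n; intros N HN; rewrite sum_n_psum; apply Hpsum; lia. }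
  exact (is_lim_seq_le_loc _ _ _ _ Hev (is_lim_seq_const (f n)) (Hl : is_lim_seq (sum_n f) l)).
Qed.

Lemma Rabs_le_Sup_seq_Rabs (u : nat -> R) M :
  (forall n, Rabs (u n) <= M) ->
  forall n, Rabs (u n) <= real (Sup_seq (fun n => Finite (Rabs (u n)))).
Proof.
  intros HM n.
  destruct (is_sup_seq_lub _ _ (Sup_seq_correct (fun n => Finite (Rabs (u n))))) as [_ Hlub].
  assert (Hub : Rbar_le (Sup_seq (fun n => Finite (Rabs (u n)))) (Finite M)).
  { apply Hlub; intros x [k ->]; apply HM. }
  assert (Hterm : Rbar_le (Finite (Rabs (u n))) (Sup_seq (fun n => Finite (Rabs (u n))))).
  { apply Sup_seq_minor_le with n; simpl; lra. }
  destruct (Sup_seq (fun n => Finite (Rabs (u n)))); simpl in *; auto; contradiction.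
Qed.

Lemma Rabs_le_norm_X X z : valid_space X -> in_X X z -> forall n, Rabs (z n) <= norm_X X z.
Proof.
  intros hX Hz n; destruct X as [p| | |]; simpl in *.
  - destruct Hz as [l Hl].
    rewrite (is_series_unique _ _ Hl).
    destruct (Req_EM_T (z n) 0) as [Hzn|Hzn].
    { rewrite Hzn, Rabs_R0; apply rpow_abs_nonneg. }
    pose proof (is_series_ge_term _ _ n (fun k => rpow_abs_nonneg (z k) p) Hl) as Hge.
    unfold rpow_abs in Hge; destruct (Req_EM_T (z n) 0) as [|_]; [contradiction|].
    assert (Hpos : 0 < Rpower (Rabs (z n)) p) by apply exp_pos.
    unfold rpow_abs; destruct (Req_EM_T l 0) as [Hl0|_]; [lra|].
    replace (Rabs (z n)) with (Rpower (Rpower (Rabs (z n)) p) (1 / p)) at 1.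
    + apply Rle_Rpower_l; [left; apply Rdiv_lt_0_compat; lra|].
      rewrite (Rabs_right l); lra.
    + rewrite Rpower_mult; replace (p * (1 / p)) with 1 by (field; lra).
      apply Rpower_1, Rabs_pos_lt, Hzn.
  - destruct Hz as [M HM]; exact (Rabs_le_Sup_seq_Rabs z M HM n).
  - destruct (filterlim_bounded (K:=R_AbsRing) (V:=R_NormedModule) z Hz) as [M HM].
    exact (Rabs_le_Sup_seq_Rabs z M HM n).
  - destruct (filterlim_bounded (K:=R_AbsRing) (V:=R_NormedModule) z (ex_intro _ 0 Hz)) as [M HM].
    exact (Rabs_le_Sup_seq_Rabs z M HM n).
Qed.

Lemma ex_series_geometric_bound (w : nat -> R) E mu :
  0 < mu < 1 -> (forall n, Rabs (w n) <= E * mu ^ n) ->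
  ex_series w /\ Rabs (Series w) <= E / (1 - mu).
Proof.
  intros Hmu Hw.
  assert (Hg : is_series (fun n => E * mu ^ n) (E / (1 - mu))).
  { apply (is_series_scal_l (K:=R_AbsRing) (V:=R_NormedModule) E (fun n => mu ^ n)).
    apply is_series_geom; rewrite Rabs_right; lra. }
  assert (Habs : ex_series (fun n => Rabs (w n))).
  { apply (@ex_series_le R_AbsRing R_CompleteNormedModule _ (fun n => E * mu ^ n)).
    - intros n; change (norm (Rabs (w n))) with (Rabs (Rabs (w n))).
      rewrite Rabs_Rabsolu; apply Hw.
    - eexists; exact Hg. }
  split; [apply ex_series_Rabs, Habs|].
  eapply Rle_trans; [apply Series_Rabs, Habs|].
  rewrite <- (is_series_unique _ _ Hg).
  apply Series_le; [intros n; split; [apply Rabs_pos | apply Hw] | eexists; exact Hg].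
Qed.

Lemma is_series_indicator (c : nat -> R) i :
  is_series (fun j => c j * (if Nat.eq_dec j i then 1 else 0)) (c i).
Proof.
  set (g := fun j => c j * (if Nat.eq_dec j i then 1 else 0)).
  assert (Hbelow : psum g i = 0).
  { rewrite (psum_ext g (fun _ => 0 * 0)).
    - rewrite psum_scal; ring.
    - intros k Hk; unfold g; destruct (Nat.eq_dec k i); [lia | ring]. }
  assert (Hpsum : forall N, (i <= N)%nat -> sum_n g N = c i).
  { intros N HN; rewrite sum_n_psum; induction HN as [|N HiN IH]; simpl.
    - rewrite Hbelow; unfold g; destruct (Nat.eq_dec i i); [ring | congruence].
    - simpl in IH; rewrite IH; unfold g; destruct (Nat.eq_dec (S N) i); [lia | ring]. }
  change (is_lim_seq (sum_n g) (c i)).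
  apply (is_lim_seq_ext_loc (fun _ => c i)); [|apply is_lim_seq_const].
  exists i; intros N HN; symmetry; apply Hpsum; exact HN.
Qed.

Lemma in_Y_indicator X b i :
  valid_space X -> 0 < b i -> in_Y X b (fun n => if Nat.eq_dec n i then 1 else 0).
Proof.
  intros hX Hbi.
  assert (Hmu : 0 < / 2 < 1) by lra.
  pose proof (pow_lt (/ 2) i (proj1 Hmu)).
  apply in_X_geometric_bound with (D := b i / (/ 2) ^ i) (mu := / 2); auto.
  - apply Rdiv_lt_0_compat; lra.
  - intros n; pose proof (pow_lt (/ 2) n (proj1 Hmu)).
    destruct (Nat.eq_dec n i) as [->|_].
    + rewrite Rmult_1_r, Rabs_right by lra; right; field; lra.
    + rewrite Rmult_0_r, Rabs_R0; apply Rmult_le_pos; [apply Rlt_le, Rdiv_lt_0_compat|]; lra.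
Qed.

(** * Consequences of the bound on [phi] *)

Lemma pow_absdiff_le mu i j : 0 < mu <= 1 -> mu ^ absdiff i j <= mu ^ j / mu ^ i.
Proof.
  intros Hmu; pose proof (pow_lt mu i (proj1 Hmu)).
  apply Rmult_le_reg_r with (mu ^ i); [lra|].
  replace (mu ^ j / mu ^ i * mu ^ i) with (mu ^ j) by (field; lra).
  rewrite <- pow_add; apply pow_le_decr; [lra | unfold absdiff; lia].
Qed.

Lemma phi_mul_phi_swap a b i j :
  0 < a i -> 0 < a j -> 0 < b i -> 0 < b j ->
  phi a b i j * phi a b j i = a i * a j / (a i + a j) ^ 2.
Proof. intros; unfold phi; field; repeat split; lra. Qed.

Lemma Pmat_mul_b a b pi i j :
  0 < a i -> 0 < a j -> 0 < b j -> Pmat a pi i j * b i = pi j * b j * phi a b i j.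
Proof. intros; unfold Pmat, phi; field; lra. Qed.

Section PhiBounds.

Variables (a b : nat -> R) (C mu : R).
Hypothesis a_pos : forall n, 0 < a n.
Hypothesis a_decr : forall n, a (S n) < a n.
Hypothesis b_pos : forall n, 0 < b n.
Hypothesis mu_range : 0 < mu < 1.
Hypothesis phi_le : forall i j, phi a b i j <= C * mu ^ absdiff i j.

Lemma phi_pos i j : 0 < phi a b i j.
Proof.
  pose proof (a_pos i); pose proof (a_pos j); pose proof (b_pos i); pose proof (b_pos j).
  unfold phi; apply Rdiv_lt_0_compat; [apply Rdiv_lt_0_compat; lra|].
  pose proof (Rdiv_lt_0_compat (a i) (a j)); lra.
Qed.

Lemma phi_le_pow_ratio i j :
  phi a b i j <= C * (mu ^ j / mu ^ i) /\ phi a b i j <= C * (mu ^ i / mu ^ j).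
Proof.
  assert (0 <= C) by (pose proof (phi_pos i j); pose proof (phi_le i j);
                      pose proof (pow_lt mu (absdiff i j) (proj1 mu_range)); nra).
  split; eapply Rle_trans; try apply phi_le; apply Rmult_le_compat_l; try lra.
  - apply pow_absdiff_le; lra.
  - replace (absdiff i j) with (absdiff j i) by (unfold absdiff; lia).
    apply pow_absdiff_le; lra.
Qed.

(* [phi n 0 * phi 0 n] is comparable to [a n / a 0] and at most [(C mu^n)^2]. *)
Lemma a_le_geometric n : a n <= 4 * C ^ 2 * a 0%nat * mu ^ n.
Proof.
  pose proof (le_a0_of_decr a a_decr n) as Ha0.
  pose proof (a_pos n); pose proof (a_pos 0%nat).
  pose proof (phi_mul_phi_swap a b n 0 (a_pos n) (a_pos 0) (b_pos n) (b_pos 0)) as Hswap.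
  pose proof (phi_le n 0) as Hn0; pose proof (phi_le 0 n) as H0n.
  replace (absdiff n 0) with n in Hn0 by (unfold absdiff; lia).
  replace (absdiff 0 n) with n in H0n by (unfold absdiff; lia).
  pose proof (phi_pos n 0); pose proof (phi_pos 0 n).
  pose proof (pow_le_decr mu 0 n ltac:(lra) ltac:(lia)) as Hmu1; simpl in Hmu1.
  pose proof (pow_lt mu n (proj1 mu_range)).
  assert (Hprod : a n * a 0%nat / (a n + a 0%nat) ^ 2 <= C ^ 2 * mu ^ n).
  { rewrite <- Hswap.
    apply Rle_trans with ((C * mu ^ n) * (C * mu ^ n)); [apply Rmult_le_compat; lra|].
    assert (0 <= C) by nra. nra. }
  apply Rmult_le_reg_r with (a 0%nat); [lra|].
  apply Rle_trans with (C ^ 2 * mu ^ n * (a n + a 0%nat) ^ 2).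
  - replace (a n * a 0%nat) with (a n * a 0%nat / (a n + a 0%nat) ^ 2 * (a n + a 0%nat) ^ 2)
      by (field; lra).
    apply Rmult_le_compat_r; [nra | exact Hprod].
  - assert (0 <= C ^ 2 * mu ^ n) by (apply Rmult_le_pos; [apply pow2_ge_0 | lra]).
    assert ((a n + a 0%nat) ^ 2 <= 4 * a 0%nat * a 0%nat) by nra.
    replace (4 * C ^ 2 * a 0%nat * mu ^ n * a 0%nat)
      with (C ^ 2 * mu ^ n * (4 * a 0%nat * a 0%nat)) by ring.
    apply Rmult_le_compat_l; assumption.
Qed.

End PhiBounds.

Section Eigenvectors.

Variables (X : seqspace) (a b pi : nat -> R) (M C mu : R).
Hypothesis hX : valid_space X.
Hypothesis a_pos : forall n, 0 < a n.
Hypothesis a_decr : forall n, a (S n) < a n.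
Hypothesis b_pos : forall n, 0 < b n.
Hypothesis hpi : is_pi a pi.
Hypothesis pi_bound : forall n, Rabs (pi n) <= M.
Hypothesis C_pos : 0 < C.
Hypothesis mu_range : 0 < mu < 1.
Hypothesis phi_le : forall i j, phi a b i j <= C * mu ^ absdiff i j.

Lemma Rabs_pi_ge2 n : 2 <= Rabs (pi n).
Proof.
  pose proof (Rabs_pprod_le_pi a a_pos (a_inj_of_decr a a_decr) pi hpi n 0) as Hpprod.
  simpl in Hpprod; rewrite Rmult_1_r, Rabs_right in Hpprod; lra.
Qed.

Lemma Pmat_diag_neq0 n : Pmat a pi n n <> 0.
Proof.
  pose proof (Rabs_pi_ge2 n) as Hpi2; pose proof (a_pos n).
  unfold Pmat; replace (a n * pi n / (a n + a n)) with (pi n / 2) by (field; lra).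
  intros Hzero; replace (pi n) with 0 in Hpi2 by lra; rewrite Rabs_R0 in Hpi2; lra.
Qed.

Let weights_sum :=
  is_series_weights a pi _ M mu a_pos a_decr hpi pi_bound mu_range
    (a_le_geometric a b C mu a_pos a_decr b_pos mu_range phi_le).

Lemma is_series_Pmat_row i : is_series (fun j => Pmat a pi i j) 1.
Proof.
  eapply is_series_ext; [|apply (weights_sum i)].
  intros n; unfold Pmat; simpl; rewrite (Rplus_comm (a n)); reflexivity.
Qed.

Lemma is_series_ktilde_column j :
  is_series (fun n => - a n * pi n * Pmat a pi n j) (- (a j * pi j)).
Proof.
  replace (- (a j * pi j)) with (scal (- (a j * pi j)) 1) by (unfold scal; simpl; apply Rmult_1_r).
  eapply is_series_ext; [|apply (is_series_scal_l _ _ _ (weights_sum j))].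
  intros n; unfold Pmat, scal; simpl; unfold mult; simpl.
  pose proof (a_pos n); pose proof (a_pos j); field; lra.
Qed.

Lemma Pmat_column_in_Y j : in_Y X b (fun i => Pmat a pi i j).
Proof.
  pose proof (Rabs_pi_ge2 0); pose proof (pi_bound 0%nat).
  pose proof (b_pos j); pose proof (pow_lt mu j (proj1 mu_range)).
  apply in_X_geometric_bound with (D := M * b j * C / mu ^ j) (mu := mu); auto.
  - apply Rdiv_lt_0_compat; [repeat apply Rmult_lt_0_compat|]; lra.
  - intros i; rewrite Rmult_comm, Pmat_mul_b by auto.
    pose proof (phi_le_pow_ratio a b C mu a_pos b_pos mu_range phi_le i j) as [_ Hphi].
    pose proof (phi_pos a b a_pos b_pos i j).
    rewrite !Rabs_mult, (Rabs_right (b j)), (Rabs_right (phi a b i j)) by lra.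
    apply Rle_trans with (M * b j * (C * (mu ^ i / mu ^ j))).
    + apply Rmult_le_compat; [apply Rmult_le_pos; [apply Rabs_pos|lra] | lra | | exact Hphi].
      apply Rmult_le_compat_r; [lra | apply pi_bound].
    + right; field; lra.
Qed.

Lemma eigvec_Ttilde_Pmat_column j : eigvec_Ttilde X a b pi (fun i => Pmat a pi i j) (- a j).
Proof.
  pose proof (is_series_ktilde_column j) as Hk.
  split; [apply Pmat_column_in_Y | split; [exists j; apply Pmat_diag_neq0 | split]].
  - eexists; exact Hk.
  - intros i; unfold Ttilde, ktilde; rewrite (is_series_unique _ _ Hk).
    unfold Pmat; pose proof (a_pos i); pose proof (a_pos j); field; lra.
Qed.

Lemma Rabs_Pmat_row_term_le i y :
  in_Y X b y ->
  forall j, Rabs (Pmat a pi i j * y j) <= M * C * norm_Y X b y / (b i * mu ^ i) * mu ^ j.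
Proof.
  intros Hy j.
  pose proof (Rabs_le_norm_X X _ hX Hy j) as Hyj; simpl in Hyj; fold (norm_Y X b y) in Hyj.
  pose proof (phi_le_pow_ratio a b C mu a_pos b_pos mu_range phi_le i j) as [Hphi _].
  pose proof (phi_pos a b a_pos b_pos i j).
  pose proof (b_pos i); pose proof (pow_lt mu i (proj1 mu_range)).
  replace (Pmat a pi i j * y j) with (Pmat a pi i j * b i * y j / b i) by (field; lra).
  rewrite Pmat_mul_b by auto.
  assert (Hre : pi j * b j * phi a b i j * y j / b i = pi j * phi a b i j * (b j * y j) / b i).
  { field; lra. }
  rewrite Hre; set (w := b j * y j) in *.
  rewrite Rabs_div, !Rabs_mult, (Rabs_right (phi a b i j)), (Rabs_right (b i)) by lra.
  apply Rle_trans with (M * (C * (mu ^ j / mu ^ i)) * norm_Y X b y / b i).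
  - unfold Rdiv; apply Rmult_le_compat_r; [left; apply Rinv_0_lt_compat; lra|].
    apply Rmult_le_compat; [apply Rmult_le_pos; [apply Rabs_pos | lra] | apply Rabs_pos | | exact Hyj].
    apply Rmult_le_compat; [apply Rabs_pos | lra | apply pi_bound | exact Hphi].
  - right; field; lra.
Qed.

(* [a n pi n = (a 0 + a n) Pmat a pi 0 n]: the [ktilde] series is dominated by row 0. *)
Lemma Rabs_ktilde_term_le y :
  in_Y X b y ->
  forall n, Rabs (- a n * pi n * y n) <= 2 * a 0%nat * M * C * norm_Y X b y / b 0%nat * mu ^ n.
Proof.
  intros Hy n.
  pose proof (a_pos n); pose proof (a_pos 0%nat); pose proof (b_pos 0%nat).
  pose proof (le_a0_of_decr a a_decr n).
  replace (- a n * pi n * y n) with (- (a 0%nat + a n) * (Pmat a pi 0 n * y n))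
    by (unfold Pmat; field; lra).
  rewrite Rabs_mult, Rabs_Ropp, (Rabs_right (a 0%nat + a n)) by lra.
  replace (2 * a 0%nat * M * C * norm_Y X b y / b 0%nat * mu ^ n)
    with (2 * a 0%nat * (M * C * norm_Y X b y / (b 0%nat * mu ^ 0) * mu ^ n))
    by (simpl; field; lra).
  apply Rmult_le_compat; [lra | apply Rabs_pos | lra | apply Rabs_Pmat_row_term_le, Hy].
Qed.

Lemma Pmat_row_series_bound i y :
  in_Y X b y ->
  ex_series (fun j => Pmat a pi i j * y j) /\
  Rabs (Series (fun j => Pmat a pi i j * y j))
    <= M * C / (b i * mu ^ i) / (1 - mu) * norm_Y X b y.
Proof.
  intros Hy.
  destruct (ex_series_geometric_bound _ _ mu mu_range (Rabs_Pmat_row_term_le i y Hy))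
    as [Hex Hle].
  split; [exact Hex|].
  pose proof (b_pos i); pose proof (pow_lt mu i (proj1 mu_range)).
  eapply Rle_trans; [exact Hle|]; right; field; repeat split; lra.
Qed.

Lemma Series_Pmat_row_Ttilde i y :
  in_Y X b y ->
  Series (fun j => Pmat a pi i j * Ttilde a pi y j) = - a i * Series (fun j => Pmat a pi i j * y j).
Proof.
  intros Hy.
  assert (Hk : ex_series (fun n => - a n * pi n * y n))
    by (eapply ex_series_geometric_bound, Rabs_ktilde_term_le; eauto).
  pose proof (proj1 (Pmat_row_series_bound i y Hy)) as HF.
  assert (Hrow : ex_series (fun j => Pmat a pi i j)) by (eexists; apply is_series_Pmat_row).
  set (k := ktilde a pi y).
  rewrite (Series_ext _ (fun j => (- a j * pi j * y j) * -1
                                 + ((Pmat a pi i j * y j) * - a i + Pmat a pi i j * k))).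
  - rewrite Series_plus, Series_plus, !Series_scal_r,
      (is_series_unique (Pmat a pi i) 1 (is_series_Pmat_row i)).
    + unfold k, ktilde; ring.
    + apply ex_series_scal_r, HF.
    + apply ex_series_scal_r, Hrow.
    + apply ex_series_scal_r, Hk.
    + apply (ex_series_plus (V := R_NormedModule)); apply ex_series_scal_r; assumption.
  - intros j; unfold Ttilde; fold k; unfold Pmat.
    pose proof (a_pos i); pose proof (a_pos j); field; lra.
Qed.

Lemma eigvec_adjoint_Pmat_row i : eigvec_adjoint X a b pi (fun j => Pmat a pi i j) (- a i).
Proof.
  split; [|split; [|split]].
  - intros y Hy; apply Pmat_row_series_bound, Hy.
  - exists (M * C / (b i * mu ^ i) / (1 - mu)); intros y Hy; apply Pmat_row_series_bound, Hy.
  - exists (fun n => if Nat.eq_dec n i then 1 else 0); split.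
    + apply in_Y_indicator; auto.
    + rewrite (is_series_unique _ _ (is_series_indicator (fun j => Pmat a pi i j) i)).
      apply Pmat_diag_neq0.
  - intros y Hy; apply Series_Pmat_row_Ttilde, Hy.
Qed.

End Eigenvectors.

Theorem proposition6 (X : seqspace) (a b pi : nat -> R)
  (hX : valid_space X)
  (ha_pos : forall n, 0 < a n)
  (ha_dec : forall n, a (S n) < a n)
  (ha_lim : is_lim_seq a 0)
  (hb_pos : forall n, 0 < b n)
  (hb_X : in_X X b)
  (hpi : is_pi a pi)
  (hpi_bdd : exists M, forall n, Rabs (pi n) <= M)
  (hphi : exists C mu, 0 < C /\ 0 < mu < 1 /\
            forall i j, phi a b i j <= C * mu ^ (absdiff i j)) :
  (forall j, eigvec_Ttilde X a b pi (fun i => Pmat a pi i j) (- a j)) /\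
  (forall i, eigvec_adjoint X a b pi (fun j => Pmat a pi i j) (- a i)).
Proof.
  (* [ha_lim] is implied by the bound on [phi] (which forces [a n = O(mu^n)]), and [hb_X]
     only serves to make [Ttilde] map [Y] into itself. *)
  destruct hpi_bdd as [M hM], hphi as [C [mu [hC [hmu hph]]]].
  split.
  - intros j; eapply eigvec_Ttilde_Pmat_column; eauto.
  - intros i; eapply eigvec_adjoint_Pmat_row; eauto.
Qed.
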